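(* Let $q$ be a prime power, $1\le k\le n\le m$, let $g_1,\dots,g_n\in\mathbb{F}_{q^m}$ be linearly independent over $\mathbb{F}_q$, and let $\mathcal{G}$ be the Gabidulin code of dimension $k$ with respect to $g_1,\dots,g_n$. Let $f\in\mathcal{L}_q(x,\mathbb{F}_{q^m})$ with $k\le\deg_q(f)<n$ and $\sigma_f=(f(g_1),\dots,f(g_n))$. Then $$d_H(\sigma_f,\mathcal{G})\ge n-\deg_q(f).$$ Moreover, if $f$ is monic, then $d_H(\sigma_f,\mathcal{G})=n-\deg_q(f)$ if and only if there exist a subset $E=\{g_{i_1},\dots,g_{i_{\deg_q(f)}}\}\subseteq\{g_1,\dots,g_n\}$ of size $\deg_q(f)$ and $v\in\mathcal{L}_q(x,\mathbb{F}_{q^m})$ with $v=0$ or $\deg_q(v)\le k-1$ such that $$f(x)-v(x)=\prod_{g\in\langle E\rangle}(x-g).$$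
   Context: A $q$-linearized polynomial over $\mathbb{F}_{q^m}$ is a polynomial $L(x)=\sum_{i=0}^{d}a_ix^{q^i}$ with $a_i\in\mathbb{F}_{q^m}$; if $a_d\ne0$, $d$ is its $q$-degree $\deg_q(L)$; $L$ is monic if $a_d=1$. $\mathcal{L}_q(x,\mathbb{F}_{q^m})$ is the set of these. $d_H$ denotes Hamming distance on $\mathbb{F}_{q^m}^n$ and $d_H(\mathbf{u},C)=\min_{\mathbf{c}\in C}d_H(\mathbf{u},\mathbf{c})$. $\langle E\rangle$ is the $\mathbb{F}_q$-span of $E$. The Gabidulin code of dimension $k$ with respect to $\mathbb{F}_q$-linearly independent $g_1,\dots,g_n$ is $\mathcal{G}=\{(v(g_1),\dots,v(g_n)) : v\in\mathcal{L}_q(x,\mathbb{F}_{q^m}),\ v=0\text{ or }\deg_q(v)<k\}$. *)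

From HB Require Import structures.
From mathcomp Require Import all_boot all_order all_algebra all_field.
From Stdlib Require Import ClassicalEpsilon.
Set Implicit Arguments. Unset Strict Implicit. Unset Printing Implicit Defensive.
Import GRing.Theory.
Local Open Scope ring_scope.

(* F_q-linear notions
   (free, span <<_>>) are mathcomp's vector-space notions of L over F. *)

Section Defs.
Variables (F : finFieldType) (L : fieldExtType F).

Definition qlinearized (q : nat) (p : {poly L}) : Prop :=
  forall i : nat, p`_i != 0 -> exists j : nat, i = (q ^ j)%N.

(* q-degree: for nonzero linearized p of q-degree d, size p = q^d + 1. *)
Definition qdeg (q : nat) (p : {poly L}) : nat := trunc_log q (size p).-1.

Definition hamming (n : nat) (u c : 'I_n -> L) : nat :=
  #|[pred i : 'I_n | u i != c i]|.

Definition dist_code (n : nat) (u : 'I_n -> L) (C : ('I_n -> L) -> Prop) : nat :=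
  epsilon (inhabits 0%N)
    (fun d => (exists c, C c /\ hamming u c = d) /\
              (forall c, C c -> (d <= hamming u c)%N)).

Definition gabidulin (q n k : nat) (g : 'I_n -> L) (c : 'I_n -> L) : Prop :=
  exists v : {poly L}, qlinearized q v /\ (v = 0 \/ (qdeg q v < k)%N) /\
    forall i, c i = v.[g i].

Definition span_poly (E : seq L) : {poly L} :=
  \prod_(x : finvect_type L | x \in <<E>>%VS) ('X - (x : L)%:P).

End Defs.

From HB Require Import structures.
From mathcomp Require Import all_boot all_order all_algebra all_field.
From mathcomp Require Import all_fingroup all_solvable.
From Stdlib Require Import ClassicalEpsilon Classical.
Set Implicit Arguments. Unset Strict Implicit. Unset Printing Implicit Defensive.
Import GRing.Theory.
Local Open Scope ring_scope.

(* A q-linearized polynomial h acts F_q-linearly on L, so it vanishes on the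
   whole F_q-span of any of its roots.  If h vanishes on free elements
   g_i (i in I), the product of X - x over that span, a monic polynomial of
   degree q^|I| with distinct roots, divides h; hence |I| <= deg_q h, with
   equality (for monic h) only if h is that product.  For a codeword v, the
   positions where sigma_f agrees with v are the roots g_i of f - v, a monic
   q-linearized polynomial of the same q-degree as f. *)

Section QLinearized.
Variables (F : finFieldType) (L : fieldExtType F).
Local Notation q := #|F|.

Lemma pnat_card_pchar : [pchar L].-nat q.
Proof.
have [p _ pF] := finPcharP F.
have := abelem_pgroup (fin_ring_pchar_abelem pF).
rewrite /pgroup cardsT (eq_pnat _ (pchar_lalg L)).
by rewrite (eq_pnat _ (pcharf_eq pF)).
Qed.

Lemma exprDn_card (j : nat) (x y : L) :
  (x + y) ^+ (q ^ j) = x ^+ (q ^ j) + y ^+ (q ^ j).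
Proof. by apply: exprDn_pchar; rewrite pnatX pnat_card_pchar. Qed.

Lemma exprZn_card (j : nat) (a : F) (x : L) :
  (a *: x) ^+ (q ^ j) = a *: x ^+ (q ^ j).
Proof.
rewrite exprZn; congr (_ *: _).
by elim: j => [|j IHj]; rewrite ?expr1 // expnSr exprM IHj expf_card.
Qed.

Lemma horner_qlinZD (p : {poly L}) (a : F) (x y : L) : qlinearized q p ->
  p.[a *: x + y] = a *: p.[x] + p.[y].
Proof.
move=> qlin_p; rewrite !horner_coef scaler_sumr -big_split /=.
apply: eq_bigr => i _.
have [->|/qlin_p[j ->]] := eqVneq p`_i 0; first by rewrite !mul0r scaler0 addr0.
by rewrite exprDn_card exprZn_card mulrDr scalerAr.
Qed.

Lemma horner_qlin0 (p : {poly L}) : qlinearized q p -> p.[0] = 0.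
Proof.
move=> qlin_p; rewrite horner_coef0; apply: contraTeq isT => /qlin_p[j].
move/esym/eqP; rewrite expn_eq0 => /andP[/eqP q0 _].
by have := finNzRing_gt1 F; rewrite q0.
Qed.

Lemma root_qlin_span (p : {poly L}) (X : seq L) (x : L) : qlinearized q p ->
  {in X, forall y, root p y} -> x \in <<X>>%VS -> root p x.
Proof.
move=> qlin_p rootX; rewrite -[X]/(val (in_tuple X)) => /coord_span ->.
elim/big_ind: _ => [|u w /rootP pu /rootP pw|i _]; apply/rootP.
- exact: horner_qlin0.
- by rewrite -[u]scale1r horner_qlinZD // pu pw scaler0 addr0.
- rewrite -[_ *: _]addr0 horner_qlinZD // horner_qlin0 // addr0.
  by rewrite (rootP (rootX _ (mem_nth 0 _))) ?scaler0.
Qed.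

Lemma qlinearizedB (p r : {poly L}) :
  qlinearized q p -> qlinearized q r -> qlinearized q (p - r).
Proof.
move=> qlin_p qlin_r i; rewrite coefB.
have [p0|/qlin_p //] := eqVneq p`_i 0.
have [r0|/qlin_r //] := eqVneq r`_i 0.
by rewrite p0 r0 subrr eqxx.
Qed.

Lemma size_qlin (p : {poly L}) : qlinearized q p -> p != 0 ->
  size p = (q ^ qdeg q p).+1.
Proof.
move=> qlin_p p0.
have [|j Dj] := qlin_p (size p).-1; first by rewrite -lead_coefE lead_coef_eq0.
by rewrite /qdeg Dj trunc_expnK ?finNzRing_gt1 // -Dj prednK ?size_poly_gt0.
Qed.

Lemma span_poly_monic (X : seq L) : span_poly X \is monic.
Proof. exact: monic_prod_XsubC. Qed.

Lemma root_span_poly (X : seq L) (x : L) : x \in <<X>>%VS -> root (span_poly X) x.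
Proof.
move=> Xx; rewrite /span_poly (bigD1 (x : finvect_type L)) //=.
by rewrite rootM root_XsubC eqxx.
Qed.

Lemma span_polyE (X : seq L) :
  span_poly X = \prod_(x <- enum [pred x : finvect_type L | x \in <<X>>%VS])
                  ('X - (x : L)%:P).
Proof. by rewrite /span_poly -big_enum; apply: congr_big => //; apply: eq_enum. Qed.

Lemma size_span_poly (X : seq L) : free X ->
  size (span_poly X) = (q ^ size X).+1.
Proof.
move=> freeX; rewrite span_polyE size_prod_XsubC -cardE.
by rewrite -(eqP freeX) -(@card_vspace F (finvect_type L)).
Qed.

Lemma span_poly_dvdp (h : {poly L}) (X : seq L) : qlinearized q h ->
  {in X, forall x, root h x} -> span_poly X %| h.
Proof.
move=> qlin_h rootX; rewrite span_polyE; apply: uniq_roots_dvdp.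
  apply/allP => x; rewrite (@mem_enum (finvect_type L)).
  exact: root_qlin_span.
by rewrite uniq_rootsE; exact: enum_uniq.
Qed.

Lemma qlin_free_roots_le (h : {poly L}) (X : seq L) :
  qlinearized q h -> h != 0 -> free X -> {in X, forall x, root h x} ->
  (size X <= qdeg q h)%N.
Proof.
move=> qlin_h h0 freeX rootX.
have := dvdp_leq h0 (span_poly_dvdp qlin_h rootX).
by rewrite size_span_poly // size_qlin // ltnS leq_exp2l // finNzRing_gt1.
Qed.

Lemma qlin_free_roots_span_poly (h : {poly L}) (X : seq L) :
  qlinearized q h -> h \is monic -> free X -> {in X, forall x, root h x} ->
  size X = qdeg q h -> h = span_poly X.
Proof.
move=> qlin_h mon_h freeX rootX sizeX; apply/eqP.
rewrite -eqp_monic ?span_poly_monic // eqp_sym.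
rewrite -dvdp_size_eqp ?span_poly_dvdp // size_span_poly // sizeX.
by rewrite size_qlin ?monic_neq0.
Qed.

Lemma free_map_set (n : nat) (g : 'I_n -> L) (I : {set 'I_n}) :
  free [seq g i | i <- enum 'I_n] -> free [seq g i | i in I].
Proof.
have splitI : perm_eq (enum I ++ enum (~: I)) (enum 'I_n).
  apply: uniq_perm; rewrite ?enum_uniq //.
    rewrite cat_uniq !enum_uniq andbT /=; apply/hasPn => i.
    by rewrite !mem_enum in_setC.
  by move=> i; rewrite mem_cat !mem_enum in_setC orbN.
by rewrite -(perm_free (perm_map g splitI)) map_cat => /catl_free.
Qed.

End QLinearized.

Lemma ex_minimal_nat (P : nat -> Prop) (d : nat) :
  P d -> exists m, P m /\ forall d', P d' -> (m <= d')%N.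
Proof.
elim/ltn_ind: d => d IHd Pd.
have [[d' [lt_d'd Pd']]|no_smaller] := classic (exists d', (d' < d)%N /\ P d').
  exact: IHd lt_d'd Pd'.
exists d; split => // d' Pd'; rewrite leqNgt; apply/negP => lt_d'd.
by apply: no_smaller; exists d'.
Qed.

Lemma dist_codeP (F : finFieldType) (L : fieldExtType F) (n : nat)
    (u : 'I_n -> L) (C : ('I_n -> L) -> Prop) (c0 : 'I_n -> L) : C c0 ->
  (exists2 c, C c & hamming u c = dist_code u C) /\
  (forall c, C c -> (dist_code u C <= hamming u c)%N).
Proof.
move=> Cc0; rewrite /dist_code.
set P := fun d => _ /\ _; suff [d Pd] : exists d, P d.
  have [[c [Cc <-]] min_c] := epsilon_spec (inhabits 0%N) P (ex_intro _ d Pd).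
  by split=> //; exists c.
have [d [[c [Cc <-]] min_d]] := @ex_minimal_nat
  (fun d => exists c, C c /\ hamming u c = d) _ (ex_intro _ c0 (conj Cc0 erefl)).
exists (hamming u c); split; first by exists c.
by move=> c' Cc'; apply: min_d; exists c'.
Qed.

Lemma hammingE (F : finFieldType) (L : fieldExtType F) (n : nat) (u c : 'I_n -> L) :
  hamming u c = (n - #|[set i | u i == c i]|)%N.
Proof.
rewrite /hamming -[n in (n - _)%N]card_ord -(cardC [set i | u i == c i]) addKn.
by apply: eq_card => i; rewrite !inE.
Qed.

Section Gabidulin.
Variables (F : finFieldType) (L : fieldExtType F) (n k : nat).
Variables (g : 'I_n -> L) (f : {poly L}).
Hypotheses (free_g : free [seq g i | i <- enum 'I_n]).
Hypotheses (qlin_f : qlinearized #|F| f) (f0 : f != 0) (k_le_f : (k <= qdeg #|F| f)%N).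

Local Notation sigma := (fun i : 'I_n => f.[g i]).
Local Notation code := (gabidulin #|F| k g).
Local Notation agree c := [set i | sigma i == c i].

Lemma size_low_qdeg_lt (v : {poly L}) :
  qlinearized #|F| v -> (v = 0 \/ (qdeg #|F| v < k)%N) -> (size v < size f)%N.
Proof.
move=> qlin_v [->|lt_vk]; first by rewrite size_poly0 size_poly_gt0.
have [->|v0] := eqVneq v 0; first by rewrite size_poly0 size_poly_gt0.
rewrite !size_qlin // ltnS ltn_exp2l ?finNzRing_gt1 //.
exact: leq_trans lt_vk k_le_f.
Qed.

Lemma agree_codeword (v : {poly L}) :
  agree (fun i => v.[g i]) = [set i | root (f - v) (g i)].
Proof. by apply/setP => i; rewrite !inE rootE hornerD hornerN subr_eq0. Qed.

Lemma free_agree (c : 'I_n -> L) : free [seq g i | i in agree c].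
Proof. exact: free_map_set. Qed.

Lemma roots_agree (v : {poly L}) :
  {in [seq g i | i in agree (fun i => v.[g i])], forall x, root (f - v) x}.
Proof. by move=> x /mapP[i]; rewrite mem_enum agree_codeword inE => root_gi ->. Qed.

Lemma card_agree_le (c : 'I_n -> L) : code c -> (#|agree c| <= qdeg #|F| f)%N.
Proof.
move=> [v [qlin_v [low_v Dc]]].
have lt_vf := size_low_qdeg_lt qlin_v low_v.
have size_fv : size (f - v) = size f by rewrite size_polyDl ?size_polyN.
have fv0 : f - v != 0 by rewrite -size_poly_eq0 size_fv size_poly_eq0.
have Dagree : agree c = agree (fun i => v.[g i]) by apply/setP => i; rewrite !inE Dc.
rewrite Dagree cardE -(size_map g) /qdeg -size_fv.
exact: qlin_free_roots_le (qlinearizedB qlin_f qlin_v) fv0 (free_agree _) (roots_agree (v:=v)).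
Qed.

Lemma card_agree_span_poly (c : 'I_n -> L) : f \is monic -> code c ->
  #|agree c| = qdeg #|F| f ->
  exists2 v : {poly L}, qlinearized #|F| v /\ (v = 0 \/ (qdeg #|F| v < k)%N) &
    f - v = span_poly [seq g i | i in agree c].
Proof.
move=> mon_f [v [qlin_v [low_v Dc]]] card_agree; exists v => //.
have lt_vf := size_low_qdeg_lt qlin_v low_v.
have size_fv : size (f - v) = size f by rewrite size_polyDl ?size_polyN.
have Dagree : agree c = agree (fun i => v.[g i]) by apply/setP => i; rewrite !inE Dc.
rewrite Dagree; apply: (qlin_free_roots_span_poly (qlinearizedB qlin_f qlin_v) _
  (free_agree _) (roots_agree (v:=v))).
  by rewrite monicE lead_coefDl ?size_polyN -?monicE.
by rewrite size_map -cardE -Dagree card_agree /qdeg size_fv.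
Qed.

Lemma subset_agree_span_poly (I : {set 'I_n}) (v : {poly L}) :
  f - v = span_poly [seq g i | i in I] -> I \subset agree (fun i => v.[g i]).
Proof.
move=> Dfv; rewrite agree_codeword; apply/subsetP => i Ii; rewrite inE Dfv.
by apply/root_span_poly/memv_span/map_f; rewrite mem_enum.
Qed.

Lemma zero_codeword : code (fun=> 0).
Proof.
exists 0; split; first by move=> i; rewrite coef0 eqxx.
by split; [left | move=> i; rewrite horner0].
Qed.

Lemma dist_code_ge : (n - qdeg #|F| f <= dist_code sigma code)%N.
Proof.
have [[c Cc <-] _] := dist_codeP sigma zero_codeword.
by rewrite hammingE leq_sub2l // card_agree_le.
Qed.

End Gabidulin.

Theorem theorem2 (F : finFieldType) (L : fieldExtType F) (q m n k : nat)
  (Hq : #|F| = q) (Hm : \dim (fullv : {vspace L}) = m)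
  (Hk1 : (1 <= k)%N) (Hkn : (k <= n)%N) (Hnm : (n <= m)%N)
  (g : 'I_n -> L) (Hg : free [seq g i | i <- enum 'I_n])
  (f : {poly L}) (Hf : qlinearized q f) (Hf0 : f != 0)
  (Hdeg1 : (k <= qdeg q f)%N) (Hdeg2 : (qdeg q f < n)%N) :
  let sigma_f := fun i : 'I_n => f.[g i] in
  let G := gabidulin q k g in
  (n - qdeg q f <= dist_code sigma_f G)%N /\
  (f \is monic ->
    (dist_code sigma_f G = (n - qdeg q f)%N <->
     exists (I : {set 'I_n}) (v : {poly L}),
       #|I| = qdeg q f /\
       qlinearized q v /\ (v = 0 \/ (qdeg q v <= k - 1)%N) /\
       f - v = span_poly [seq g i | i in I])).
Proof.
move=> sigma_f G; subst q.
have low_qdegE (v : {poly L}) : (qdeg #|F| v <= k - 1)%N = (qdeg #|F| v < k)%N.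
  by rewrite subn1 -ltnS prednK.
have [[c Gc dist_c] dist_min] := dist_codeP sigma_f (zero_codeword k g).
have dist_ge := dist_code_ge Hg Hf Hf0 Hdeg1.
split=> // mon_f; split=> [dist_eq | [I [v [card_I [qlin_v [low_v Dfv]]]]]].
- have card_agree : #|[set i | sigma_f i == c i]| = qdeg #|F| f.
    apply/eqP; rewrite eqn_leq (card_agree_le Hg Hf Hf0 Hdeg1 Gc) /=.
    by rewrite -(leq_sub2lE _ (ltnW Hdeg2)) -hammingE dist_c dist_eq.
  have [v [qlin_v low_v] Dfv] := card_agree_span_poly Hg Hf Hf0 Hdeg1 mon_f Gc card_agree.
  by exists [set i | sigma_f i == c i], v; rewrite low_qdegE.
- have Gv : G (fun i => v.[g i]).
    by exists v; rewrite -low_qdegE.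
  apply/eqP; rewrite eqn_leq dist_ge andbT (leq_trans (dist_min _ Gv)) //.
  by rewrite hammingE leq_sub2l // -card_I subset_leq_card // subset_agree_span_poly.
Qed.
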